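(* Let $\mathcal{E}$ be an information exchange that does not transmit information about actions (with local states $L_i=S_i\times D_i$), let $P$ and $P'$ be decision protocols for $\mathcal{E}$, and let the failure model $\mathcal{F}$ act independently on message and action memory. Let $r$ and $r'$ be corresponding runs of $\mathcal{I}_{P,\mathcal{E},\mathcal{F}}$ and $\mathcal{I}_{P',\mathcal{E},\mathcal{F}}$ respectively. Then: (1) for all agents $i$ and times $m$, if $r_i(m)=(s,d)$ and $r'_i(m)=(s',d')$ then $s=s'$; moreover, the vector of messages sent by agent $i$ in round $m+1$ of $r$ equals that sent by $i$ in round $m+1$ of $r'$, both before and after perturbation by the failure model. (2) For all agents $i$ and times $m$ such that agent $i$ performs only $\mathtt{noop}$ at times $0,\dots,m-1$ in both $r$ and $r'$, we have $r_i(m)=r'_i(m)$.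
   Context: Agents $\mathrm{Agt}=\{1,\dots,n\}$; decision values $V$; actions $A_i=\{\mathtt{noop}\}\cup\{\mathtt{decide}_i(v):v\in V\}$. An information exchange $\mathcal{E}$ gives each agent $i$ a tuple $(L_i,I_i,M_i,\mu_i,\delta_i)$: local states $L_i$, initial states $I_i$, messages $M_i\ni\bot$, $\mu_i:L_i\times A_i\to(\mathrm{Agt}\to M_i)$ (messages $i$ sends each agent), $\delta_i:L_i\times A_i\times\prod_jM_j\to L_i$. It does not transmit information about actions if for each $i$ there are sets $S_i,D_i$ with $L_i=S_i\times D_i$ and functions $\mu'_i$ on $S_i$, $\delta^1_i:S_i\times\prod_jM_j\to S_i$, $\delta^2_i:D_i\times A_i\to D_i$ such that $\mu_i((s,d),a)=\mu'_i(s)$ and $\delta_i((s,d),a,m)=(\delta^1_i(s,m),\delta^2_i(d,a))$ for all $(s,d),a,m$; $s$ is the message memory and $d$ the action memory. A decision protocol is $P=(P_i:L_i\to A_i)_i$. A failure model $\mathcal{F}=(L^*_e,I_e,\delta_e,\mathit{Adv})$ has environment states, nonempty initial ones, update $\delta_e:L^*_e\times\prod_iA_i\to L^*_e$, and adversaries $(\Delta^t,\Delta^r,\Delta^s)$, $\Delta^t,\Delta^r:\mathbb{N}\times\mathrm{Agt}\times\mathrm{Agt}\times\bigcup_iM_i\to\bigcup_iM_i$, $\Delta^s_i:\mathbb{N}\times L_i\to L_i$. It acts independently on message and action memory if for every adversary and agent $i$ there are $\Delta^s_1:\mathbb{N}\times S_i\to S_i$ and $\Delta^s_2:\mathbb{N}\times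 D_i\to D_i$ with $\Delta^s_i(k,(s,d))=(\Delta^s_1(k,s),\Delta^s_2(k,d))$. Runs $r$ of $\mathcal{I}_{P,\mathcal{E},\mathcal{F}}$: $r(0)=((s_e,\alpha),s_1,\dots,s_n)$ with $s_e\in I_e,\alpha\in\mathit{Adv},s_i\in I_i$; from $r(k)=((s_e,\alpha),s_1,\dots,s_n)$, $r(k+1)=((\delta_e(s_e,(a_1,\dots,a_n)),\alpha),s'_1,\dots,s'_n)$ where $a_i=P_i(s_i)$ (the action of $i$ at time $k$), $m_{i,j}=\mu_i(s_i,a_i)(j)$ is the message sent by $i$ to $j$ in round $k+1$ before perturbation, $\Delta^t(k,i,j,m_{i,j})$ after transmission perturbation, $m'_{i,j}=\Delta^r(k,i,j,\Delta^t(k,i,j,m_{i,j}))$ the message received, $s^*_j=\delta_j(s_j,a_j,(m'_{1,j},\dots,m'_{n,j}))$ and $s'_j=\Delta^s_j(k,s^*_j)$. Runs $r$ of $\mathcal{I}_{P,\mathcal{E},\mathcal{F}}$ and $r'$ of $\mathcal{I}_{P',\mathcal{E},\mathcal{F}}$ correspond if $r(0)=r'(0)$. *)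

From mathcomp Require Import all_boot.
Set Implicit Arguments. Unset Strict Implicit. Unset Printing Implicit Defensive.

(* Actions: noop or decide v (the agent index of decide_i(v) is implicit:
   each agent only ever uses its own action type). *)
Inductive action (V : Type) : Type := noop | decide (v : V).
Arguments noop {V}.

(* Information exchange whose local states are L_i = S_i * D_i.
   M is the common message type (the union of the M_i), with bottom. *)
Record exchange (n : nat) (V : Type) (S D : 'I_n -> Type) (M : Type) := Exchange {
  ex_init : forall i, S i * D i -> Prop;
  ex_bot : M;
  ex_mu : forall i, S i * D i -> action V -> 'I_n -> M;
  ex_delta : forall i, S i * D i -> action V -> ('I_n -> M) -> S i * D i
}.

Arguments ex_init {n V S D M} e i _.
Arguments ex_mu {n V S D M} e i _ _ _.
Arguments ex_delta {n V S D M} e i _ _ _.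

Definition loc n (S D : 'I_n -> Type) (i : 'I_n) : Type := (S i * D i)%type.

Definition no_action_info n V S D M (E : @exchange n V S D M) : Prop :=
  exists (mu' : forall i, S i -> 'I_n -> M)
         (delta1 : forall i, S i -> ('I_n -> M) -> S i)
         (delta2 : forall i, D i -> action V -> D i),
  forall i (s : S i) (d : D i) (a : action V) (m : 'I_n -> M),
    ex_mu E i (s, d) a = mu' i s /\
    ex_delta E i (s, d) a m = (delta1 i s m, delta2 i d a).

Record adversary n (L : 'I_n -> Type) (M : Type) := Adversary {
  adv_t : nat -> 'I_n -> 'I_n -> M -> M;
  adv_r : nat -> 'I_n -> 'I_n -> M -> M;
  adv_s : forall i, nat -> L i -> L i
}.

Arguments adv_s {n L M} a i _ _.

Record failure_model n V (L : 'I_n -> Type) (M Le : Type) := FailureModel {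
  fm_init : Le -> Prop;
  fm_init_ne : exists e, fm_init e;
  fm_delta : Le -> (forall i : 'I_n, action V) -> Le;
  fm_adv : adversary L M -> Prop
}.

Definition acts_independently n V S D M Le
    (F : @failure_model n V (loc S D) M Le) : Prop :=
  forall alpha, fm_adv F alpha -> forall i,
  exists (Ds1 : nat -> S i -> S i) (Ds2 : nat -> D i -> D i),
  forall k (s : S i) (d : D i), adv_s alpha i k (s, d) = (Ds1 k s, Ds2 k d).

Definition protocol n V (L : 'I_n -> Type) := forall i : 'I_n, L i -> action V.
Arguments protocol : clear implicits.

Definition gstate n (L : 'I_n -> Type) (M Le : Type) : Type :=
  ((Le * adversary L M) * (forall i : 'I_n, L i))%type.

Section Runs.
Local Unset Implicit Arguments.
Variables (n : nat) (V : Type) (S D : 'I_n -> Type) (M Le : Type).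
Variables (E : exchange V S D M) (F : failure_model V (loc S D) M Le).
Variable (P : protocol n V (loc S D)).

Definition lstate (r : nat -> gstate (loc S D) M Le) (m : nat) (i : 'I_n) : loc S D i :=
  (r m).2 i.
Definition radv (r : nat -> gstate (loc S D) M Le) (m : nat) : adversary (loc S D) M :=
  (r m).1.2.

(* message sent by i to j in round m+1, before perturbation *)
Definition msg_sent r m (i j : 'I_n) : M :=
  ex_mu E i (lstate r m i) (P i (lstate r m i)) j.
Definition msg_trans r m (i j : 'I_n) : M := adv_t (radv r m) m i j (msg_sent r m i j).
Definition msg_recv r m (i j : 'I_n) : M := adv_r (radv r m) m i j (msg_trans r m i j).

Definition step (k : nat) (g : gstate (loc S D) M Le) : gstate (loc S D) M Le :=
  let se := g.1.1 in let alpha := g.1.2 in let ls := g.2 in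
  let a := fun i => P i (ls i) in
  ((fm_delta F se a, alpha),
   fun j => adv_s alpha j k
     (ex_delta E j (ls j) (a j)
        (fun i => adv_r alpha k i j (adv_t alpha k i j (ex_mu E i (ls i) (a i) j))))).

Definition is_run (r : nat -> gstate (loc S D) M Le) : Prop :=
  [/\ fm_init F (r 0).1.1, fm_adv F (r 0).1.2, (forall i, ex_init E i ((r 0).2 i))
    & forall k, r k.+1 = step k (r k)].
End Runs.
Arguments lstate {n S D M Le} r m i.
Arguments radv {n S D M Le} r m.
Arguments msg_sent {n V S D M Le} E P r m i j.
Arguments msg_trans {n V S D M Le} E P r m i j.
Arguments msg_recv {n V S D M Le} E P r m i j.
Arguments step {n V S D M Le} E F P k g.
Arguments is_run {n V S D M Le} E F P r.

From mathcomp Require Import all_boot.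
From Stdlib Require Import FunctionalExtensionality.

Set Implicit Arguments.
Unset Strict Implicit.
Unset Printing Implicit Defensive.

(* Since the exchange ignores actions when sending messages and when updating
   the message memory, and the adversary updates the two memories separately,
   the message memory of an agent evolves independently of the protocol.  Two
   corresponding runs start in the same global state with the same adversary,
   so by induction on time they agree on all message memories, hence on all
   messages.  The action memory is then fed the same inputs in both runs as
   long as the agent performs [noop] in both. *)

Section ExchangeMemory.
Variables (n : nat) (V : Type) (S D : 'I_n -> Type) (M : Type).
Variable E : exchange V S D M.
Hypothesis E_no_action_info : no_action_info E.

Lemma ex_mu_msg_mem i (x y : loc S D i) a b :
  x.1 = y.1 -> ex_mu E i x a = ex_mu E i y b.
Proof.
have [mu' [delta1 [delta2 HE]]] := E_no_action_info.
case: x y => [s d] [s' d'] /= <-.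
by rewrite (HE i s d a (fun _ => ex_bot E)).1 (HE i s d' b (fun _ => ex_bot E)).1.
Qed.

Lemma ex_delta_msg_mem i (x y : loc S D i) a b m :
  x.1 = y.1 -> (ex_delta E i x a m).1 = (ex_delta E i y b m).1.
Proof.
have [mu' [delta1 [delta2 HE]]] := E_no_action_info.
case: x y => [s d] [s' d'] /= <-.
by rewrite (HE i s d a m).2 (HE i s d' b m).2.
Qed.

End ExchangeMemory.

Lemma adv_s_msg_mem n V (S D : 'I_n -> Type) M Le
    (F : failure_model V (loc S D) M Le) alpha i k (x y : loc S D i) :
  acts_independently F -> fm_adv F alpha ->
  x.1 = y.1 -> (adv_s alpha i k x).1 = (adv_s alpha i k y).1.
Proof.
move=> HF /HF /(_ i) [Ds1 [Ds2 HD]].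
by case: x y => [s d] [s' d'] /= <-; rewrite !HD.
Qed.

Section Runs.
Variables (n : nat) (V : Type) (S D : 'I_n -> Type) (M Le : Type).
Variables (E : exchange V S D M) (F : failure_model V (loc S D) M Le).
Implicit Types (P : protocol n V (loc S D)) (r : nat -> gstate (loc S D) M Le).

Lemma radv_run P r m : is_run E F P r -> radv r m = radv r 0.
Proof. by case=> _ _ _ Hstep; elim: m => [//|m IH]; rewrite /radv Hstep. Qed.

Lemma fm_adv_radv_run P r m : is_run E F P r -> fm_adv F (radv r m).
Proof. by move=> Hr; rewrite (radv_run m Hr); case: Hr. Qed.

Lemma lstate_runS P r m j : is_run E F P r ->
  lstate r m.+1 j =
  adv_s (radv r m) j m
    (ex_delta E j (lstate r m j) (P j (lstate r m j))
       (fun i => msg_recv E P r m i j)).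
Proof. by case=> _ _ _ Hstep; rewrite /lstate Hstep. Qed.

Variables (P P' : protocol n V (loc S D)) (r r' : nat -> gstate (loc S D) M Le).
Arguments P : clear implicits.
Arguments P' : clear implicits.
Hypotheses (Hr : is_run E F P r) (Hr' : is_run E F P' r') (Hr0 : r 0 = r' 0).
Hypotheses (HE : no_action_info E) (HF : acts_independently F).

Lemma radv_corresponding m : radv r m = radv r' m.
Proof. by rewrite (radv_run m Hr) (radv_run m Hr') /radv Hr0. Qed.

Section MessageMemory.
Variable m : nat.
Hypothesis msg_mem_eq : forall i, (lstate r m i).1 = (lstate r' m i).1.

Lemma msg_sent_corresponding i j : msg_sent E P r m i j = msg_sent E P' r' m i j.
Proof. by apply: (congr1 (@^~ j)); exact: ex_mu_msg_mem. Qed.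

Lemma msg_trans_corresponding i j : msg_trans E P r m i j = msg_trans E P' r' m i j.
Proof. by rewrite /msg_trans msg_sent_corresponding radv_corresponding. Qed.

Lemma msg_recv_corresponding i j : msg_recv E P r m i j = msg_recv E P' r' m i j.
Proof. by rewrite /msg_recv msg_trans_corresponding radv_corresponding. Qed.

Lemma msg_recv_vector_corresponding j :
  (fun i => msg_recv E P r m i j) = (fun i => msg_recv E P' r' m i j).
Proof. by apply: functional_extensionality => i; exact: msg_recv_corresponding. Qed.

End MessageMemory.

Lemma msg_mem_corresponding m i : (lstate r m i).1 = (lstate r' m i).1.
Proof.
elim: m i => [|m IH] i; first by rewrite /lstate Hr0.
rewrite (lstate_runS m i Hr) (lstate_runS m i Hr') -radv_corresponding.
rewrite -msg_recv_vector_corresponding //.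
apply: adv_s_msg_mem HF (fm_adv_radv_run m Hr) _.
exact: ex_delta_msg_mem.
Qed.

Lemma lstate_corresponding_noop i m :
  (forall k, k < m -> P i (lstate r k i) = noop /\ P' i (lstate r' k i) = noop) ->
  lstate r m i = lstate r' m i.
Proof.
elim: m => [|m IH] Hnoop; first by rewrite /lstate Hr0.
have [Pnoop P'noop] := Hnoop m (ltnSn m).
rewrite (lstate_runS m i Hr) (lstate_runS m i Hr') Pnoop P'noop.
rewrite IH => [|k /ltnW]; last exact: Hnoop.
by rewrite radv_corresponding (msg_recv_vector_corresponding (msg_mem_corresponding m)).
Qed.

End Runs.

Theorem lemma13 (n : nat) (V : Type) (S D : 'I_n -> Type) (M Le : Type)
    (E : exchange V S D M) (F : failure_model V (loc S D) M Le)
    (P P' : protocol n V (loc S D))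
    (r r' : nat -> gstate (loc S D) M Le) :
  no_action_info E ->
  acts_independently F ->
  is_run E F P r -> is_run E F P' r' ->
  r 0 = r' 0 ->
  (forall (i : 'I_n) (m : nat),
      (lstate r m i).1 = (lstate r' m i).1 /\
      (forall j : 'I_n,
         [/\ msg_sent E P r m i j = msg_sent E P' r' m i j,
             msg_trans E P r m i j = msg_trans E P' r' m i j
           & msg_recv E P r m i j = msg_recv E P' r' m i j])) /\
  (forall (i : 'I_n) (m : nat),
      (forall k, k < m -> P i (lstate r k i) = noop /\ P' i (lstate r' k i) = noop) ->
      lstate r m i = lstate r' m i).
Proof.
move=> HE HF Hr Hr' Hr0.
have msg_mem := msg_mem_corresponding Hr Hr' Hr0 HE HF.
split=> i m; last exact: (lstate_corresponding_noop Hr Hr' Hr0 HE HF).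
split=> [|j]; first exact: msg_mem.
split; first exact: (msg_sent_corresponding P P' HE (msg_mem m)).
  exact: (msg_trans_corresponding Hr Hr' Hr0 HE (msg_mem m)).
exact: (msg_recv_corresponding Hr Hr' Hr0 HE (msg_mem m)).
Qed.
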